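(* Let $\gamma$ be Euler's constant, and define $a_1=1/2$ and, for $j\ge2$, $a_j=\dfrac{\nu(j-1)}{2j(2j-1)(2j-2)}$. Then for every integer $N\ge2$, $$\gamma-\sum_{j=1}^N a_j<\frac{2+\nu(N-1)+1/(N-1)}{16(N-1)^2}.$$
   Context: $\gamma=\lim_{n\to\infty}\left(-\ln n+\sum_{i=1}^n 1/i\right)$ is Euler's constant. For a positive integer $t$, $\nu(t)$ denotes the number of digits in the binary expansion of $t$, i.e. $\nu(t)=\lfloor\log_2 t\rfloor+1$. *)

From Stdlib Require Import Reals Lra Lia Arith.
Open Scope R_scope.

Fixpoint harmonic (n : nat) : R :=
  match n with
  | O => 0
  | S m => harmonic m + / INR (S m)
  end.

Definition euler_seq (n : nat) : R := harmonic n - ln (INR n).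

Definition is_euler_gamma (g : R) : Prop := Un_cv euler_seq g.

(* nu t = number of binary digits of t (t >= 1) = floor(log2 t) + 1 *)
Definition nu (t : nat) : nat := (Nat.log2 t + 1)%nat.

Definition a (j : nat) : R :=
  match j with
  | O => 0 (* unused *)
  | S O => / 2
  | _ => INR (nu (j - 1)) / (2 * INR j * (2 * INR j - 1) * (2 * INR j - 2))
  end.

Fixpoint sum_a (N : nat) : R :=
  match N with
  | O => 0
  | S m => sum_a m + a (S m)
  end.

From Stdlib Require Import Reals Lra Lia.
Open Scope R_scope.

(* Let E(n) = H_n - ln n and D(m) = 1/(4m) + E(2m) - E(m).  Then
   D(j-1) - D(j) = 1/(2j(2j-1)(2j-2)), so a_j = nu(j-1) (D(j-1) - D(j)), and
   summation by parts (nu jumps exactly when j-1 is a power of 2) gives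
   sum_{j<=N} a_j = 1/2 + sum_{2^k<N} D(2^k) - nu(N-1) D(N).  The dyadic sum
   telescopes to E(2^(K+1)) - 2^-(K+2) - 1/2, which tends to gamma - 1/2.
   Comparing consecutive differences shows that D(m) - 1/(16m(m-1)) increases
   to 0, so D(m) <= 1/(16m(m-1)); this bounds nu(N-1) D(N), and makes the
   dyadic tail sum_{2^k>=P} D(2^k) telescope below 1/(12P(P-1)) with P >= N. *)

Lemma Un_cv_subseq (u : nat -> R) (l : R) (phi : nat -> nat) :
  (forall n, (n <= phi n)%nat) -> Un_cv u l -> Un_cv (fun n => u (phi n)) l.
Proof.
  intros Hphi Hu eps Heps. destruct (Hu eps Heps) as [N HN].
  exists N. intros n Hn. apply HN. specialize (Hphi n). lia.
Qed.

Lemma Un_cv_inv_scal_INR (c : R) : 0 < c -> Un_cv (fun n => / (c * INR n)) 0.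
Proof.
  intros Hc. apply cv_infty_cv_0. intros M.
  destruct (INR_unbounded (M / c)) as [N HN]. exists N. intros n Hn.
  apply le_INR in Hn.
  replace M with (c * (M / c)) by (field; lra).
  apply Rmult_lt_compat_l; lra.
Qed.

Lemma lim_le_decreasing_majorant (u v : nat -> R) (l : R) :
  Un_decreasing u -> (forall n, v n <= u n) -> Un_cv v l -> forall n, l <= u n.
Proof.
  intros Hu Hvu Hv n.
  apply (@Rle_cv_lim (fun k => v (k + n)%nat) (fun _ => u n)).
  - intros k. apply Rle_trans with (u (k + n)%nat); [apply Hvu|].
    apply decreasing_prop; [exact Hu | lia].
  - apply Un_cv_subseq; [lia | exact Hv].
  - intros eps Heps. exists 0%nat. intros. rewrite Rdist_eq. lra.
Qed.

Lemma INR_pow2 (k : nat) : INR (2 ^ k) = 2 ^ k.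
Proof. rewrite pow_INR. reflexivity. Qed.

Lemma log2_succ_pow2 (n : nat) :
  Nat.log2 (S n) = S (Nat.log2 n) -> S n = (2 ^ Nat.log2 (S n))%nat.
Proof.
  intros H. destruct (Nat.log2_eq_succ_is_pow2 n H) as [b Hb].
  rewrite Hb, Nat.log2_pow2; lia.
Qed.

Definition defect (m : nat) : R := / (4 * INR m) + euler_seq (2 * m) - euler_seq m.

Lemma defect_harmonic (m : nat) : (1 <= m)%nat ->
  defect m = / (4 * INR m) + harmonic (2 * m) - harmonic m - ln 2.
Proof.
  intros Hm. assert (0 < INR m) by (apply lt_0_INR; lia).
  unfold defect, euler_seq. rewrite mult_INR, ln_mult by (simpl; lra).
  replace (INR 2) with 2 by reflexivity. lra.
Qed.

Lemma defect_sub_succ (m : nat) : (1 <= m)%nat ->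
  defect m - defect (S m) =
  / (2 * INR (S m) * (2 * INR (S m) - 1) * (2 * INR (S m) - 2)).
Proof.
  intros Hm. rewrite !defect_harmonic by lia.
  replace (2 * S m)%nat with (S (S (2 * m))) by lia. cbn [harmonic].
  rewrite !S_INR, !mult_INR. replace (INR 2) with 2 by reflexivity.
  assert (1 <= INR m) by (apply (le_INR 1); lia).
  field. repeat split; lra.
Qed.

Lemma a_defect (i : nat) :
  a (S (S i)) = INR (nu (S i)) * (defect (S i) - defect (S (S i))).
Proof.
  rewrite defect_sub_succ by lia. reflexivity.
Qed.

Lemma dyadic_defect_sum (K : nat) :
  / 2 + sum_f_R0 (fun k => defect (2 ^ k)) K = euler_seq (2 ^ S K) - / 2 ^ S (S K).
Proof.
  induction K as [|K IH].
  - unfold defect, euler_seq. cbn. rewrite ln_1. field.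
  - rewrite tech5, <- Rplus_assoc, IH. unfold defect.
    rewrite INR_pow2. change (2 * 2 ^ S K)%nat with (2 ^ S (S K))%nat.
    assert (0 < 2 ^ K) by (apply pow_lt; lra).
    cbn [pow]. field. lra.
Qed.

Lemma sum_a_by_parts (m : nat) :
  sum_a (S (S m)) = / 2 + sum_f_R0 (fun k => defect (2 ^ k)) (Nat.log2 (S m))
                    - INR (nu (S m)) * defect (S (S m)).
Proof.
  induction m as [|m IH].
  - cbn [sum_a]. rewrite a_defect. cbn. lra.
  - change (sum_a (S (S (S m)))) with (sum_a (S (S m)) + a (S (S (S m)))).
    rewrite IH, a_defect. unfold nu.
    destruct (Nat.log2_succ_or (S m)) as [Hjump | Hsame].
    + rewrite Hjump, tech5, <- Hjump, <- (log2_succ_pow2 _ Hjump), Hjump.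
      rewrite !plus_INR, (S_INR (Nat.log2 (S m))). ring.
    + rewrite Hsame. ring.
Qed.

Lemma inv_cubic_le_telescope (x : R) : 2 <= x ->
  / (2 * (x + 1) * (2 * (x + 1) - 1) * (2 * (x + 1) - 2))
  <= / (16 * x * (x - 1)) - / (16 * (x + 1) * (x + 1 - 1)).
Proof.
  intros Hx.
  assert (E : / (16 * x * (x - 1)) - / (16 * (x + 1) * (x + 1 - 1))
              - / (2 * (x + 1) * (2 * (x + 1) - 1) * (2 * (x + 1) - 2))
              = 3 / (8 * (x - 1) * x * (x + 1) * (2 * x + 1)))
    by (field; repeat split; lra).
  assert (0 < 3 / (8 * (x - 1) * x * (x + 1) * (2 * x + 1))).
  { apply Rdiv_lt_0_compat; [lra|]. repeat apply Rmult_lt_0_compat; lra. }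
  lra.
Qed.

Definition dyadic_majorant (y : R) : R := / (12 * y * (y - 1)).

Lemma dyadic_majorant_pos (y : R) : 1 < y -> 0 < dyadic_majorant y.
Proof.
  intros Hy. apply Rinv_0_lt_compat. repeat apply Rmult_lt_0_compat; lra.
Qed.

Lemma le_dyadic_majorant_sub (y : R) : 1 < y ->
  / (16 * y * (y - 1)) <= dyadic_majorant y - dyadic_majorant (2 * y).
Proof.
  intros Hy. unfold dyadic_majorant.
  assert (E : / (12 * y * (y - 1)) - / (12 * (2 * y) * (2 * y - 1)) - / (16 * y * (y - 1))
              = / (48 * y * (y - 1) * (2 * y - 1)))
    by (field; repeat split; lra).
  assert (0 < / (48 * y * (y - 1) * (2 * y - 1))).
  { apply Rinv_0_lt_compat. repeat apply Rmult_lt_0_compat; lra. }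
  lra.
Qed.

Section EulerGamma.

Variable g : R.
Hypothesis Hg : is_euler_gamma g.

Lemma defect_cv_0 : Un_cv defect 0.
Proof.
  replace 0 with (0 + g - g) by ring.
  apply CV_minus; [apply CV_plus|exact Hg].
  - apply Un_cv_inv_scal_INR. lra.
  - apply (Un_cv_subseq euler_seq g (fun m => 2 * m)%nat); [lia | exact Hg].
Qed.

Lemma defect_le (m : nat) : (2 <= m)%nat -> defect m <= / (16 * INR m * (INR m - 1)).
Proof.
  intros Hm.
  set (majorant := fun k : nat => / (16 * INR k * (INR k - 1))).
  assert (Hdec : Un_decreasing (fun n => majorant (n + m)%nat - defect (n + m)%nat)).
  { intros n. cbn beta. unfold majorant. rewrite Nat.add_succ_l.
    pose proof (defect_sub_succ (n + m) ltac:(lia)) as Hstep.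
    assert (Hx : 2 <= INR (n + m)) by (apply (le_INR 2); lia).
    pose proof (inv_cubic_le_telescope _ Hx) as Hle.
    rewrite S_INR in Hstep |- *. lra. }
  assert (Hcv : Un_cv (opp_seq (fun n => defect (n + m)%nat)) (- 0)).
  { apply CV_opp, (Un_cv_subseq defect 0 (fun n => n + m)%nat); [lia | exact defect_cv_0]. }
  assert (Hminor : forall n, opp_seq (fun n => defect (n + m)%nat) n
                             <= majorant (n + m)%nat - defect (n + m)%nat).
  { intros n. unfold opp_seq, majorant.
    assert (2 <= INR (n + m)) by (apply (le_INR 2); lia).
    enough (0 < / (16 * INR (n + m) * (INR (n + m) - 1))) by lra.
    apply Rinv_0_lt_compat. repeat apply Rmult_lt_0_compat; lra. }
  pose proof (lim_le_decreasing_majorant _ _ _ Hdec Hminor Hcv 0%nat) as Hm_bound.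
  cbn beta in Hm_bound. rewrite Nat.add_0_l in Hm_bound. unfold majorant in Hm_bound. lra.
Qed.

Lemma euler_gamma_le_dyadic (K : nat) :
  g <= / 2 + sum_f_R0 (fun k => defect (2 ^ k)) K + dyadic_majorant (2 ^ S K).
Proof.
  set (w := fun K => / 2 + sum_f_R0 (fun k => defect (2 ^ k)) K + dyadic_majorant (2 ^ S K)).
  assert (Hpow : forall k, 2 <= 2 ^ S k).
  { intros k. cbn [pow]. pose proof (pow_R1_Rle 2 k). lra. }
  assert (Hdec : Un_decreasing w).
  { intros k. unfold w. rewrite tech5.
    pose proof (defect_le (2 ^ S k) ltac:(pose proof (Nat.pow_gt_lin_r 2 (S k)); lia)) as Hd.
    rewrite INR_pow2 in Hd.
    pose proof (le_dyadic_majorant_sub (2 ^ S k) ltac:(specialize (Hpow k); lra)).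
    change (2 ^ S (S k)) with (2 * 2 ^ S k). lra. }
  apply (lim_le_decreasing_majorant w (fun K => euler_seq (2 ^ S K) - / 2 ^ S (S K)) g Hdec).
  - intros k. unfold w. rewrite <- dyadic_defect_sum.
    pose proof (dyadic_majorant_pos (2 ^ S k) ltac:(specialize (Hpow k); lra)). lra.
  - replace g with (g - 0) by ring. apply CV_minus.
    + apply (Un_cv_subseq euler_seq g (fun k => 2 ^ S k)%nat); [|exact Hg].
      intros k. pose proof (Nat.pow_gt_lin_r 2 (S k)). lia.
    + apply (Un_cv_ext (fun k => / 4 / 2 ^ k)); [|apply cv_pow_half].
      intros k. cbn [pow]. field. apply pow_nonzero. lra.
Qed.

End EulerGamma.

Lemma dyadic_majorant_add_le (x P v d : R) :
  1 <= x -> x + 1 <= P -> 0 <= v -> d <= / (16 * (x + 1) * (x + 1 - 1)) ->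
  dyadic_majorant P + v * d < (2 + v + / x) / (16 * x ^ 2).
Proof.
  intros Hx HP Hv Hd. unfold dyadic_majorant.
  assert (Hx2 : 1 <= x ^ 2) by nra.
  assert (h1 : / (12 * P * (P - 1)) <= / (12 * x ^ 2)) by (apply Rinv_le_contravar; nra).
  assert (h2 : / (12 * x ^ 2) < 2 / (16 * x ^ 2)).
  { replace (2 / (16 * x ^ 2)) with (/ (8 * x ^ 2)) by (field; lra).
    apply Rinv_lt_contravar; nra. }
  assert (h3 : v * d <= v / (16 * x ^ 2)).
  { apply Rmult_le_compat_l; [exact Hv|].
    apply Rle_trans with (1 := Hd). apply Rinv_le_contravar; nra. }
  assert (h4 : 0 < / x / (16 * x ^ 2)).
  { apply Rdiv_lt_0_compat; [apply Rinv_0_lt_compat|]; nra. }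
  replace ((2 + v + / x) / (16 * x ^ 2))
    with (2 / (16 * x ^ 2) + v / (16 * x ^ 2) + / x / (16 * x ^ 2)) by (field; lra).
  lra.
Qed.

Theorem proposition1 (g : R) (Hg : is_euler_gamma g) (N : nat) (HN : (2 <= N)%nat) :
  g - sum_a N <
  (2 + INR (nu (N - 1)) + / INR (N - 1)) / (16 * INR (N - 1) ^ 2).
Proof.
  destruct N as [|[|m]]; [lia | lia |].
  replace (S (S m) - 1)%nat with (S m) by lia.
  rewrite sum_a_by_parts.
  pose proof (euler_gamma_le_dyadic g Hg (Nat.log2 (S m))) as Hgamma.
  pose proof (defect_le g Hg (S (S m)) ltac:(lia)) as Hdefect.
  rewrite (S_INR (S m)) in Hdefect.
  assert (Hx : 1 <= INR (S m)) by (apply (le_INR 1); lia).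
  assert (HP : INR (S m) + 1 <= 2 ^ S (Nat.log2 (S m))).
  { rewrite <- INR_pow2, <- S_INR. apply le_INR.
    pose proof (Nat.log2_spec (S m) ltac:(lia)). lia. }
  pose proof (dyadic_majorant_add_le _ _ _ _ Hx HP (pos_INR (nu (S m))) Hdefect).
  lra.
Qed.
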